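(* Let $\mathbf{M}=\{\mathbf{m}^{(1)},\ldots,\mathbf{m}^{(d)}\}$ be a blocking of $\mathcal{A}\in\mathbb{R}^{n_1\times\cdots\times n_d}$ with $\mathbf{m}^{(k)}=[m^{(k)}_1,\ldots,m^{(k)}_{b_k}]$, and suppose that for each $k$ the blocking is uniform: $m^{(k)}_1=\cdots=m^{(k)}_{b_k}=\mu_k$. For $k=1,\ldots,d$ let $N_k=n_1\cdots n_k$, $B_k=b_1\cdots b_k$, $D_k=\mu_1\cdots\mu_k$ (with $B_0=D_0=N_0=1$). Let $P_{\mathbf{M}}$ be the permutation matrix defined below. Then $P_{\mathbf{M}}=Q_d\cdots Q_2Q_1$ where \[ Q_k=\begin{cases} I_{N_d} & k=1,\\ I_{b_kN_d/N_k}\otimes \Pi_{\mu_k,B_{k-1}}\otimes I_{D_{k-1}} & 1<k\le d.\end{cases} \]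
   Context: Notation: for $\mathbf{n}=(n_1,\ldots,n_d)$ and $\mathbf{1}\le\mathbf{i}\le\mathbf{n}$ (componentwise), $\mathrm{ivec}(\mathbf{i},\mathbf{n})=i_1+(i_2-1)n_1+\cdots+(i_d-1)n_1\cdots n_{d-1}$. For positive integers $q,r$, $s=qr$, the perfect shuffle $\Pi_{q,r}\in\mathbb{R}^{s\times s}$ is the permutation matrix with $\Pi_{q,r}z=[z(1:r:s);z(2:r:s);\ldots;z(r:r:s)]$. $\otimes$ is the Kronecker product. A blocking of $\mathcal{A}$ is $\mathbf{M}=\{\mathbf{m}^{(1)},\ldots,\mathbf{m}^{(d)}\}$ with each $\mathbf{m}^{(k)}$ a vector of positive integers summing to $n_k$; for $\mathbf{M}_k=\{\mathbf{m}^{(1)},\ldots,\mathbf{m}^{(k)}\}$, $\mathrm{vol}_{\mathbf{M}_k}(\mathbf{i})=m^{(1)}_{i_1}\cdots m^{(k)}_{i_k}$. The permutation $P_{\mathbf{M}}$ is defined as $P_{\mathbf{M}}=\hat Q_d\cdots\hat Q_1$ where $\hat Q_1=I_{N_d}$ and, for $1<k\le d$, $\hat Q_k=I_{N_d/N_k}\otimes\Gamma^{(k)}$ with $\Gamma^{(k)}=\mathrm{diag}(\Gamma^{(k)}_1,\ldots,\Gamma^{(k)}_{b_k})$ and $\Gamma^{(k)}_j=\mathrm{diag}(\ldots,\Pi_{\mathrm{vol}_{\mathbf{M}_{k-1}}(\mathbf{i}),m^{(k)}_j},\ldots)\cdot\Pi_{m^{(k)}_j,N_{k-1}}$, the block diagonal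 having one block per multi-index $\mathbf{1}\le\mathbf{i}\le(b_1,\ldots,b_{k-1})$ ordered by increasing $\mathrm{ivec}(\mathbf{i},(b_1,\ldots,b_{k-1}))$. (This $P_{\mathbf{M}}$ is the permutation with $P_{\mathbf{M}}\mathrm{vec}(\mathcal{A})=\mathrm{vec}_{\mathbf{M}}(\mathcal{A})$, where $\mathrm{vec}$ lists entries in $\mathrm{ivec}$ order and $\mathrm{vec}_{\mathbf{M}}$ stacks the vecs of the blocks of $\mathcal{A}$ in $\mathrm{ivec}$ order of the block index.) *)

(* Kronecker product: [tensmx] ( A *t B ) from mathcomp real_closed/mxtens.v,
   (A *t B) (i*p + j, k*q + l) = A i k * B j l  (standard Kronecker product). *)
From HB Require Import structures.
From mathcomp Require Import all_boot all_order all_algebra.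
From mathcomp Require Import mxtens.
From mathcomp Require Import reals.

Set Implicit Arguments.
Unset Strict Implicit.
Unset Printing Implicit Defensive.
Import GRing.Theory.
Local Open Scope ring_scope.

(* All indices are 0-based: the paper's mode k (1 <= k <= d) is our k-1,
   the paper's block index j (1 <= j <= b_k) is our j-1, etc.
   Data of a blocking:  n l  = n_{l+1},  b l = b_{l+1},
   m l j = m^{(l+1)}_{j+1}  (meaningful for j < b l). *)

(* N_k = n_1 ... n_k  (our  Nprod n k = prod_{l<k} n l, so Nprod n 0 = 1). *)
Definition Nprod (n : nat -> nat) (k : nat) : nat := \prod_(l < k) n l.

Definition is_blocking (d : nat) (n b : nat -> nat) (m : nat -> nat -> nat) :=
  forall k, (k < d)%N ->
    (forall j, (j < b k)%N -> (0 < m k j)%N) /\ \sum_(j < b k) m k j = n k.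

(* Resize a square matrix to the prescribed size N (identity if the size
   does not match; under the blocking hypotheses all sizes below match). *)
Definition resq (R : pzRingType) (N p : nat) (A : 'M[R]_p) : 'M[R]_N :=
  conform_mx 1%:M A.

(* Perfect shuffle Pi_{q,r} of size s = q r:
   Pi z = [z(1:r:s); z(2:r:s); ...; z(r:r:s)], i.e. (0-based)
   row a*q + c  has its 1 in column  c*r + a  (a < r, c < q). *)
Definition pshuffle (R : pzRingType) (q r : nat) : 'M[R]_(q * r) :=
  \matrix_(i, j) ((nat_of_ord j == (i %% q) * r + i %/ q)%N)%:R.

(* Digit l (0-based) of the multi-index with ivec-rank t (0-based), for the
   radices b_1, ..., : ivec(i,(b_1..b_{k-1})) - 1 = t  with i_{l+1}-1 = digit l. *)
Definition digit (b : nat -> nat) (t l : nat) : nat := (t %/ Nprod b l) %% b l.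

(* vol_{M_{k-1}}(i) for the multi-index i of rank t (paper's k = our k+1). *)
Definition vol (b : nat -> nat) (m : nat -> nat -> nat) (k t : nat) : nat :=
  \prod_(l < k) m l (digit b t l).

(* Gamma^{(k)}_j  (paper's k = our k+1, paper's j = our j+1), of size
   m^{(k)}_j N_{k-1}:
   diag_t (Pi_{vol(t), m_j}) * Pi_{m_j, N_{k-1}}. *)
Definition Gamma_j (R : pzRingType) (n b : nat -> nat) (m : nat -> nat -> nat)
    (k j : nat) : 'M[R]_(m k j * Nprod n k) :=
  resq _ (\mxdiag_(t < Nprod b k) pshuffle R (vol b m k t) (m k j))
  *m pshuffle R (m k j) (Nprod n k).

Definition Gamma (R : pzRingType) (n b : nat -> nat) (m : nat -> nat -> nat)
    (k : nat) :=
  \mxdiag_(j < b k) Gamma_j R n b m k j.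

Definition Qhat (R : pzRingType) (d : nat) (n b : nat -> nat)
    (m : nat -> nat -> nat) (k : nat) : 'M[R]_(Nprod n d) :=
  if k == 0%N then 1%:M
  else resq _ ((1%:M : 'M[R]_(Nprod n d %/ Nprod n k.+1)) *t Gamma R n b m k).

Fixpoint mxprod_desc (R : pzRingType) (N : nat) (F : nat -> 'M[R]_N) (k : nat)
  : 'M[R]_N :=
  match k with
  | 0 => 1%:M
  | k'.+1 => F k' *m mxprod_desc F k'
  end.

Definition PM (R : pzRingType) (d : nat) (n b : nat -> nat)
    (m : nat -> nat -> nat) : 'M[R]_(Nprod n d) :=
  mxprod_desc (Qhat R d n b m) d.

(* Q_k of the corollary (paper's k = our k+1), with
   B_{k-1} = Nprod b k, D_{k-1} = Nprod mu k:
   Q_1 = I,  Q_k = I_{b_k N_d / N_k} (x) Pi_{mu_k, B_{k-1}} (x) I_{D_{k-1}}. *)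
Definition Qunif (R : pzRingType) (d : nat) (n b mu : nat -> nat) (k : nat)
  : 'M[R]_(Nprod n d) :=
  if k == 0%N then 1%:M
  else resq _ (((1%:M : 'M[R]_(b k * Nprod n d %/ Nprod n k.+1))
                 *t pshuffle R (mu k) (Nprod b k))
               *t (1%:M : 'M[R]_(Nprod mu k))).

From mathcomp Require Import all_boot all_order all_algebra.
From mathcomp Require Import mxtens reals ring.

(* Every factor involved is a 0/1 matrix whose row [i] has its single 1 in
   column [f i] for an index map [f]: products compose the maps, while
   Kronecker products, block diagonals and perfect shuffles act on them by
   rewriting the mixed-radix digits of the row index.  When the blocking is
   uniform, all diagonal blocks of Gamma^(k) coincide and every volume equals
   D = D_{k-1}.  Write B = B_{k-1} and S = mu_k B D, and a row index as
   a b_k S + j S + t mu_k D + c D + e  with  j < b_k, t < B, c < mu_k, e < D.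
   Both hat Q_k and Q_k send it to  a b_k S + j S + c B D + t D + e,
   so they are the same matrix. *)

Set Implicit Arguments.
Unset Strict Implicit.
Unset Printing Implicit Defensive.
Import GRing.Theory.
Local Open Scope ring_scope.

Section MixedRadix.
Local Open Scope nat_scope.

Lemma divn_pair a c q : c < q -> (a * q + c) %/ q = a.
Proof. by move=> cq; rewrite divnMDl ?divn_small ?addn0 //; apply: leq_ltn_trans cq. Qed.

Lemma modn_pair a c q : c < q -> (a * q + c) %% q = c.
Proof. by move=> cq; rewrite modnMDl modn_small. Qed.

Lemma ltn_pair a c A q : a < A -> c < q -> a * q + c < A * q.
Proof.
move=> aA cq; apply: (@leq_trans (a.+1 * q)); first by rewrite mulSn addnC ltn_add2r.
by rewrite leq_mul2r aA orbT.
Qed.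

Lemma ltn_mulP x A q : x < A * q -> exists a c, [/\ a < A, c < q & x = a * q + c].
Proof.
move=> xAq; have q0 : 0 < q by case: q xAq; rewrite ?muln0.
exists (x %/ q), (x %% q); split; rewrite ?ltn_mod -?divn_eq //.
by rewrite ltn_divLR.
Qed.

Definition shuffle_idx q r x := x %% q * r + x %/ q.

Definition tens_idx q (f g : nat -> nat) x := f (x %/ q) * q + g (x %% q).

Definition block_idx c (F : nat -> nat -> nat) x := x %/ c * c + F (x %/ c) (x %% c).

Lemma shuffle_idxE q r a c : c < q -> shuffle_idx q r (a * q + c) = c * r + a.
Proof. by move=> cq; rewrite /shuffle_idx divn_pair ?modn_pair. Qed.

Lemma tens_idxE q f g a c : c < q -> tens_idx q f g (a * q + c) = f a * q + g c.
Proof. by move=> cq; rewrite /tens_idx divn_pair ?modn_pair. Qed.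

Lemma block_idxE c F a y : y < c -> block_idx c F (a * c + y) = a * c + F a y.
Proof. by move=> yc; rewrite /block_idx divn_pair ?modn_pair. Qed.

End MixedRadix.

Section IndexMatrices.
Variable R : pzRingType.

Definition is_index_mx p (A : 'M[R]_p) (f : nat -> nat) :=
  (forall x, (x < p)%N -> (f x < p)%N) /\
  forall i j : 'I_p, A i j = (nat_of_ord j == f i)%:R.

Lemma is_index_mx_eq p (A B : 'M[R]_p) f g :
  is_index_mx A f -> is_index_mx B g -> (forall x, (x < p)%N -> f x = g x) ->
  A = B.
Proof. by move=> [_ Af] [_ Bg] fg; apply/matrixP => i j; rewrite Af Bg fg. Qed.

Lemma is_index_mx1 p : is_index_mx (1%:M : 'M[R]_p) id.
Proof. by split=> // i j; rewrite mxE eq_sym. Qed.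

Lemma is_index_mx_pshuffle q r : is_index_mx (pshuffle R q r) (shuffle_idx q r).
Proof.
split=> [x | i j]; last by rewrite mxE.
rewrite {1}mulnC => /ltn_mulP[a [c [ar cq ->]]].
by rewrite shuffle_idxE // ltn_pair.
Qed.

Lemma is_index_mx_mul p (A B : 'M[R]_p) f g :
  is_index_mx A f -> is_index_mx B g -> is_index_mx (A *m B) (g \o f).
Proof.
move=> [fp Af] [gp Bg]; split=> [x xp | i j]; first exact/gp/fp.
rewrite mxE (bigD1 (Ordinal (fp _ (ltn_ord i)))) //= Af eqxx mul1r Bg big1 ?addr0 //.
move=> k /eqP ki; rewrite Af; case: eqP => [kf|]; last by rewrite mul0r.
by case: ki; apply: val_inj.
Qed.

Lemma is_index_mx_tens p q (A : 'M[R]_p) (B : 'M[R]_q) f g :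
  is_index_mx A f -> is_index_mx B g -> is_index_mx (A *t B) (tens_idx q f g).
Proof.
move=> [fp Af] [gq Bg]; split=> [x /ltn_mulP[a [c [ap cq ->]]] | i j].
  by rewrite tens_idxE // ltn_pair ?fp ?gq.
have q0 : (0 < q)%N by case: q {gq Bg B} i j => // i; rewrite muln0 in i; case: i.
rewrite mxE Af Bg -natrM mulnb /tens_idx {1}(divn_eq j q).
by rewrite eq_addl_mul ?ltn_mod ?gq ?ltn_mod.
Qed.

Lemma is_index_mx_resq N p (A : 'M[R]_p) f :
  p = N -> is_index_mx A f -> is_index_mx (resq N A) f.
Proof. by move=> pN; subst N; rewrite /resq conform_mx_id. Qed.

Lemma is_index_mx_diag r c (p_ : 'I_r -> nat) (B_ : forall i, 'M[R]_(p_ i))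
    (F : nat -> nat -> nat) :
  (forall i, p_ i = c) -> (forall i : 'I_r, is_index_mx (B_ i) (F i)) ->
  is_index_mx (\mxdiag_i B_ i) (block_idx c F).
Proof.
move=> pc BF.
have sum_p : (\sum_i p_ i = r * c)%N.
  by rewrite (eq_bigr (fun=> c)) // sum_nat_const card_ord.
have ltF (i : 'I_r) y : (y < c)%N -> (F i y < c)%N.
  by rewrite -(pc i) => /(proj1 (BF i)).
have sigE (s : 'I_(\sum_i p_ i)) :
    nat_of_ord s = (tagnat.sig1 s * c + tagnat.sig2 s)%N.
  rewrite {1}(tagnat.rect s) (eq_bigr (fun=> c)) //.
  by rewrite -(big_ord_widen _ (fun=> c) (ltnW (ltn_ord _))) sum_nat_const card_ord.
split=> [x | s t].
  rewrite sum_p => /ltn_mulP[a [y [ar yc ->]]].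
  by rewrite block_idxE // ltn_pair // (ltF (Ordinal ar)).
have sig2_lt (u : 'I_(\sum_i p_ i)) : (tagnat.sig2 u < c)%N.
  by rewrite -(pc (tagnat.sig1 u)).
rewrite mxE (sigE s) block_idxE // (sigE t) eq_addl_mul ?ltF // xpair_eqE.
(* Generalized over the block indices so that [i = k] can be substituted
   despite the dependent block sizes. *)
have blockE (i k : 'I_r) (a : 'I_(p_ i)) (b : 'I_(p_ k)) :
    ((if i == k then conform_mx 0 (B_ i) else 0) : 'M_(p_ i, p_ k)) a b
    = ((nat_of_ord k == i) && (nat_of_ord b == F i a))%:R.
  case: (eqVneq i k) b => [<- b|ik b]; first by rewrite conform_mx_id (proj2 (BF i)) eqxx.
  by rewrite mxE (inj_eq val_inj) eq_sym (negPf ik).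
exact: blockE.
Qed.

End IndexMatrices.

Section UniformIndices.
Local Open Scope nat_scope.

(* [u], [B], [D] play the roles of mu_k, B_{k-1}, D_{k-1}. *)
Definition gamma_idx u B D :=
  shuffle_idx u (B * D) \o block_idx (D * u) (fun=> shuffle_idx D u).

Lemma gamma_idxE u B D t c e : c < u -> e < D ->
  gamma_idx u B D (t * (D * u) + (c * D + e)) = c * (B * D) + (t * D + e).
Proof.
move=> cu eD; rewrite /gamma_idx /= block_idxE; last by rewrite [D * u]mulnC ltn_pair.
rewrite shuffle_idxE // addnA mulnA -mulnDl.
by rewrite shuffle_idxE.
Qed.

Definition Qhat_idx b u B D :=
  tens_idx (b * (u * (B * D))) id (block_idx (u * (B * D)) (fun=> gamma_idx u B D)).

Definition Qunif_idx u B D := tens_idx D (tens_idx (u * B) id (shuffle_idx u B)) id.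

Lemma Qhat_idx_Qunif_idx M b u B D x : x < M * (b * (u * (B * D))) ->
  Qhat_idx b u B D x = Qunif_idx u B D x.
Proof.
move=> /ltn_mulP[a [y [_ + ->]]] => /ltn_mulP[j [r [jb rlt ->]]].
have /ltn_mulP[t [s [tB sDu rE]]] : r < B * (D * u) by rewrite [D * u]mulnC mulnCA.
have /ltn_mulP[c [e [cu eD sE]]] : s < u * D by rewrite mulnC.
rewrite /Qhat_idx tens_idxE ?ltn_pair // block_idxE // rE sE gamma_idxE //.
have -> : a * (b * (u * (B * D))) + (j * (u * (B * D)) + (t * (D * u) + (c * D + e)))
        = ((a * b + j) * (u * B) + (t * u + c)) * D + e by ring.
rewrite /Qunif_idx tens_idxE // tens_idxE /=; last by rewrite [u * B]mulnC ltn_pair.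
by rewrite shuffle_idxE //; ring.
Qed.

End UniformIndices.

Lemma dvdn_Nprod (n : nat -> nat) k l : (k <= l)%N -> (Nprod n k %| Nprod n l)%N.
Proof. by move=> kl; rewrite /Nprod -(subnKC kl) big_split_ord dvdn_mulr. Qed.

Lemma NprodS (n : nat -> nat) k : Nprod n k.+1 = (Nprod n k * n k)%N.
Proof. exact: big_ord_recr. Qed.

Lemma ltn_digit (b : nat -> nat) k t l :
  (l < k)%N -> (t < Nprod b k)%N -> (digit b t l < b l)%N.
Proof.
move=> lk tk; rewrite /digit ltn_mod.
have : (0 < Nprod b k)%N by apply: leq_ltn_trans tk.
by rewrite /Nprod (bigD1 (Ordinal lk)) //= muln_gt0 => /andP[].
Qed.

Lemma mxprod_desc_eq (R : pzRingType) N (F G : nat -> 'M[R]_N) k :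
  (forall l, (l < k)%N -> F l = G l) -> mxprod_desc F k = mxprod_desc G k.
Proof.
by elim: k => [|k IHk] //= FG; rewrite FG // IHk // => l lk; rewrite FG // ltnW.
Qed.

Section UniformBlocking.
Variables (R : pzRingType) (d : nat) (n b : nat -> nat) (m : nat -> nat -> nat).
Variable mu : nat -> nat.
Hypothesis blockingM : is_blocking d n b m.
Hypothesis uniformM : forall k j, (k < d)%N -> (j < b k)%N -> m k j = mu k.

Lemma n_uniform k : (k < d)%N -> n k = (b k * mu k)%N.
Proof.
move=> kd; have [_ <-] := blockingM kd.
by rewrite (eq_bigr (fun=> mu k)) ?sum_nat_const ?card_ord // => j _; apply: uniformM.
Qed.

Lemma Nprod_uniform k : (k <= d)%N -> Nprod n k = (Nprod b k * Nprod mu k)%N.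
Proof.
move=> kd; rewrite /Nprod -big_split; apply: eq_bigr => l _.
by apply: n_uniform; apply: leq_trans kd.
Qed.

Lemma vol_uniform k t : (k < d)%N -> (t < Nprod b k)%N -> vol b m k t = Nprod mu k.
Proof.
move=> kd tk; apply: eq_bigr => l _; apply: uniformM; last exact: ltn_digit tk.
exact: ltn_trans kd.
Qed.

Lemma Nprod_split_uniform k : (k < d)%N ->
  Nprod n d = (Nprod n d %/ Nprod n k.+1 * (b k * (mu k * (Nprod b k * Nprod mu k))))%N.
Proof.
move=> kd; set M := (_ %/ _)%N.
rewrite -[LHS](divnK (dvdn_Nprod n kd)) -/M NprodS n_uniform // (Nprod_uniform (ltnW kd)).
ring.
Qed.

Lemma Gamma_j_index k (j : 'I_(b k)) : (k < d)%N ->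
  is_index_mx (Gamma_j R n b m k j) (gamma_idx (mu k) (Nprod b k) (Nprod mu k)).
Proof.
move=> kd; have mj := uniformM kd (ltn_ord j).
have Nk := Nprod_uniform (ltnW kd).
apply: is_index_mx_mul; last by rewrite mj Nk; apply: is_index_mx_pshuffle.
apply: is_index_mx_resq.
  under eq_bigr => t _ do rewrite vol_uniform //.
  by rewrite sum_nat_const card_ord mj Nk [RHS]mulnC mulnA.
apply: (@is_index_mx_diag _ _ _ _ _ (fun=> shuffle_idx (Nprod mu k) (mu k))) => t;
  rewrite vol_uniform // mj //.
exact: is_index_mx_pshuffle.
Qed.

Lemma Gamma_size k : (k < d)%N ->
  (\sum_(j < b k) m k j * Nprod n k = b k * (mu k * (Nprod b k * Nprod mu k)))%N.
Proof.
move=> kd; rewrite -(Nprod_uniform (ltnW kd)).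
rewrite (eq_bigr (fun=> mu k * Nprod n k)%N) ?sum_nat_const ?card_ord // => j _.
by rewrite uniformM.
Qed.

Lemma Qhat_index k : (0 < k < d)%N ->
  is_index_mx (Qhat R d n b m k) (Qhat_idx (b k) (mu k) (Nprod b k) (Nprod mu k)).
Proof.
case/andP=> k0 kd; rewrite /Qhat (negPf (lt0n_neq0 k0)).
apply: is_index_mx_resq.
  by rewrite Gamma_size // [RHS](Nprod_split_uniform kd).
rewrite /Qhat_idx -Gamma_size //; apply: is_index_mx_tens; first exact: is_index_mx1.
apply: (@is_index_mx_diag _ _ _ _ _ (fun=> gamma_idx (mu k) (Nprod b k) (Nprod mu k)))
  => [j|j]; last exact: Gamma_j_index.
by rewrite uniformM // (Nprod_uniform (ltnW kd)).
Qed.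

Lemma Qunif_index k : (0 < k < d)%N ->
  is_index_mx (Qunif R d n b mu k) (Qunif_idx (mu k) (Nprod b k) (Nprod mu k)).
Proof.
case/andP=> k0 kd; rewrite /Qunif (negPf (lt0n_neq0 k0)).
apply: is_index_mx_resq.
  by rewrite -muln_divA ?dvdn_Nprod // [RHS](Nprod_split_uniform kd); ring.
apply: is_index_mx_tens; last exact: is_index_mx1.
apply: is_index_mx_tens; [exact: is_index_mx1 | exact: is_index_mx_pshuffle].
Qed.

Lemma Qhat_uniform k : (k < d)%N -> Qhat R d n b m k = Qunif R d n b mu k.
Proof.
have [->|k0 kd] := posnP k; first by [].
have k0d : (0 < k < d)%N by rewrite k0.
apply: is_index_mx_eq (Qhat_index k0d) (Qunif_index k0d) _ => x.
rewrite (Nprod_split_uniform kd); exact: Qhat_idx_Qunif_idx.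
Qed.

End UniformBlocking.

Theorem corollary3p2 (R : realType) (d : nat) (n b : nat -> nat)
    (m : nat -> nat -> nat) (mu : nat -> nat) :
  is_blocking d n b m ->
  (forall k j, (k < d)%N -> (j < b k)%N -> m k j = mu k) ->
  PM R d n b m = mxprod_desc (Qunif R d n b mu) d.
Proof.
move=> blockingM uniformM; apply: mxprod_desc_eq => k kd.
exact: Qhat_uniform.
Qed.
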